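(* Let $V$ be an $N$-dimensional vector space over $\mathbb{F}_q$, $\mathcal{F}$ a spanning family in $V$ with projective metric $d_{\mathcal{F}}$, and $\mathcal{C}\subseteq V$ a code with at least two elements and minimum distance $d=d_{\mathcal{F}}(\mathcal{C})$. Then $|\mathcal{C}|\le q^{N-\mu_{\mathcal{F}}(d-1)}\le q^{N-d+1}$.
   Context: A spanning family is a set $\mathcal{F}$ of pairwise linearly independent nonzero vectors with $\langle\mathcal{F}\rangle=V$; $\operatorname{wt}_{\mathcal{F}}(v)=\min\{|I|:I\subseteq\mathcal{F},v\in\langle I\rangle\}$, $d_{\mathcal{F}}(x,y)=\operatorname{wt}_{\mathcal{F}}(y-x)$, and $d_{\mathcal{F}}(\mathcal{C})=\min\{d_{\mathcal{F}}(x,y):x,y\in\mathcal{C},x\neq y\}$. For an integer $0\le t\le N$, $\mu_{\mathcal{F}}(t)$ is the maximum cardinality of a subset $\mathcal{G}\subseteq\mathcal{F}$ whose elements are linearly independent and such that every $v\in\langle\mathcal{G}\rangle$ has $\operatorname{wt}_{\mathcal{F}}(v)\le t$. *)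

(* V = 'rV[F]_N, the canonical N-dimensional F-vector space,
   F a finite field with q = #|F|. *)
From HB Require Import structures.
From mathcomp Require Import all_boot all_order all_algebra all_field.
Set Implicit Arguments. Unset Strict Implicit. Unset Printing Implicit Defensive.
Import GRing.Theory.
Local Open Scope ring_scope.

Section ProjMetric.
Variables (F : finFieldType) (N : nat).
Local Notation V := 'rV[F]_N.

Definition spanS (I : {set V}) : {vspace V} := (<<enum I>>)%VS.

Definition spanning_family (Fm : {set V}) : Prop :=
  [/\ (0 : V) \notin Fm,
      (forall u v, u \in Fm -> v \in Fm -> u != v -> free [:: u; v])
    & spanS Fm = fullv].

(* wt_F(v) = min{|I| : I subset F, v in <I>}  (the default #|Fm| is never
   used when Fm spans V, since I = Fm is always admissible) *)
Definition wtF (Fm : {set V}) (v : V) : nat :=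
  \big[minn/#|Fm|]_(I : {set V} | (I \subset Fm) && (v \in spanS I)) #|I|.

Definition distF (Fm : {set V}) (x y : V) : nat := wtF Fm (y - x).

(* minimum distance of a code with at least two elements (default N unused) *)
Definition min_distF (Fm C : {set V}) : nat :=
  \big[minn/N]_(p : V * V | [&& p.1 \in C, p.2 \in C & p.1 != p.2])
     distF Fm p.1 p.2.

Definition muF (Fm : {set V}) (t : nat) : nat :=
  \max_(G : {set V} | [&& G \subset Fm, free (enum G)
                       & [forall v : V, (v \in spanS G) ==> (wtF Fm v <= t)%N]])
     #|G|.

End ProjMetric.

(** Let [G] realise [mu_F(d - 1)] and [W = <G>], so [dim W = mu_F(d - 1)] and
    every vector of [W] has weight at most [d - 1].  Two distinct codewords
    differ by a vector of weight at least [d], hence their difference is not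
    in [W]: the code injects into [V/W], which has [q^(N - dim W)] elements.
    Conversely, [d - 1] linearly independent members of [F] (they exist since
    [F] spans [V] and [d <= N]) span a space whose vectors are all of weight
    at most [d - 1], so [mu_F(d - 1) >= d - 1]. *)
From HB Require Import structures.
From mathcomp Require Import all_boot all_order all_algebra all_field zify.
Set Implicit Arguments.
Unset Strict Implicit.
Unset Printing Implicit Defensive.
Import GRing.Theory.
Local Open Scope ring_scope.

Lemma geq_bigmin_seq_cond (I : eqType) (r : seq I) (P : pred I) (f : I -> nat)
    x0 i0 :
  i0 \in r -> P i0 -> (\big[minn/x0]_(i <- r | P i) f i <= f i0)%N.
Proof.
elim: r => [|a r IHr] //=; rewrite in_cons big_cons => /orP[/eqP <- -> | r_i0 P_i0].
  exact: geq_minl.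
case: (P a); last exact: IHr.
exact: leq_trans (geq_minr _ _) (IHr r_i0 P_i0).
Qed.

Lemma geq_bigmin_cond (I : finType) (P : pred I) (f : I -> nat) x0 i0 :
  P i0 -> (\big[minn/x0]_(i | P i) f i <= f i0)%N.
Proof. by apply: geq_bigmin_seq_cond; rewrite mem_index_enum. Qed.

Section ProjectiveMetricBound.
Variables (F : finFieldType) (N : nat).
Local Notation V := 'rV[F]_N.
Implicit Types (Fm C G I : {set V}) (v x y : V).

Lemma dim_rowf : \dim {:V} = N.
Proof. by rewrite dimvf dim_matrix mul1r. Qed.

Lemma spanS0 : spanS (set0 : {set V}) = 0%VS.
Proof. by rewrite /spanS enum_set0 span_nil. Qed.

Lemma mem_spanS I v : v \in I -> v \in spanS I.
Proof. by move=> vI; apply: memv_span; rewrite mem_enum. Qed.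

Lemma dim_spanS_free G : free (enum G) -> \dim (spanS G) = #|G|.
Proof. by move=> /eqP; rewrite /spanS cardE. Qed.

Lemma free_setU1 G u :
  u \notin spanS G -> free (enum G) -> free (enum (u |: G)).
Proof.
move=> uG freeG; have uGset := contra (@mem_spanS G u) uG.
have perm_uG : perm_eq (enum (u |: G)) (u :: enum G).
  apply: uniq_perm; rewrite ?enum_uniq //= ?mem_enum ?uGset ?enum_uniq //.
  by move=> w; rewrite mem_enum in_setU1 in_cons mem_enum.
by rewrite (perm_free perm_uG) free_cons uG freeG.
Qed.

Lemma exists_free_subset I k : (k <= \dim (spanS I))%N ->
  exists G, [/\ G \subset I, free (enum G) & #|G| = k].
Proof.
elim: k => [|k IHk] k_lt; first by exists set0; rewrite sub0set enum_set0 nil_free cards0.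
have [G [GI freeG cardG]] := IHk (ltnW k_lt).
have [u uI uG] : exists2 u, u \in I & u \notin spanS G.
  apply/exists_inP; apply: contraLR k_lt => /exists_inPn I_G; rewrite -leqNgt.
  rewrite -cardG -(dim_spanS_free freeG) dimvS //.
  by apply/span_subvP => u; rewrite mem_enum => /I_G /negPn.
exists (u |: G); split.
- by rewrite subUset sub1set uI GI.
- exact: free_setU1.
- by rewrite cardsU1 (contra (@mem_spanS G u) uG) cardG.
Qed.

Lemma card_le_codim (W : {vspace V}) C :
  {in C &, forall x y, y - x \in W -> x = y} -> (#|C| <= #|F| ^ (N - \dim W))%N.
Proof.
move=> injC; pose f := addv_pi1 fullv W.
have decomp v : f v + addv_pi2 fullv W v = v.
  exact/addv_pi1_pi2/(subvP (addvSl fullv W))/memvf.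
have f_inj : {in C &, injective f}.
  move=> x y xC yC fxy; apply: injC => //.
  rewrite -(decomp x) -(decomp y) fxy.
  by rewrite (addrC (f y)) addrKA rpredB ?memv_pi2.
have -> : (N - \dim W)%N = \dim (fullv :\: W).
  by have := dimv_cap_compl fullv W; rewrite capfv dim_rowf; lia.
rewrite -(card_in_imset f_inj) -card_vspace subset_leq_card //.
by apply/subsetP => _ /imsetP[x _ ->]; apply: memv_pi.
Qed.

Section Weights.
Variable Fm : {set V}.

Lemma wtF_le_card I v : I \subset Fm -> v \in spanS I -> (wtF Fm v <= #|I|)%N.
Proof. by move=> IF vI; apply: geq_bigmin_cond; rewrite IF vI. Qed.

Lemma wtF0 : wtF Fm 0 = 0%N.
Proof.
apply/eqP; rewrite -leqn0 -[X in (_ <= X)%N](cards0 V).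
by apply: wtF_le_card; rewrite ?sub0set ?spanS0 ?mem0v.
Qed.

Lemma wtF_gt0 v : v != 0 -> v \in spanS Fm -> (0 < wtF Fm v)%N.
Proof.
move=> v0 vF; have nonempty I : v \in spanS I -> (0 < #|I|)%N.
  by rewrite card_gt0; apply: contraTneq => ->; rewrite spanS0 memv0.
apply: (big_ind (fun n => 0 < n)%N) => [||I /andP[_]].
- exact: nonempty vF.
- by move=> m n m0 n0; rewrite leq_min m0 n0.
- exact: nonempty.
Qed.

Lemma min_distF_le C x y :
  x \in C -> y \in C -> x != y -> (min_distF Fm C <= wtF Fm (y - x))%N.
Proof.
move=> xC yC xy.
by apply: (@geq_bigmin_cond _ _ _ _ (x, y)); rewrite /= xC yC.
Qed.

Lemma min_distF_leN C : (min_distF Fm C <= N)%N.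
Proof.
by apply: (big_rec (fun n => n <= N)%N) => // p n _; apply: leq_trans (geq_minr _ _).
Qed.

Definition muF_admissible (t : nat) G :=
  [&& G \subset Fm, free (enum G)
    & [forall v : V, (v \in spanS G) ==> (wtF Fm v <= t)%N]].

Lemma muF_attained t : exists2 G, muF_admissible t G & #|G| = muF Fm t.
Proof.
have [|G wG muE] := @eq_bigmax_cond _ (muF_admissible t) (fun G => #|G|).
  apply/card_gt0P; exists set0.
  rewrite unfold_in /muF_admissible sub0set enum_set0 nil_free /= spanS0.
  by apply/forall_inP => v /vlineP[k ->]; rewrite scaler0 wtF0.
by exists G => //; rewrite -muE.
Qed.

Lemma leq_muF t : (t <= \dim (spanS Fm))%N -> (t <= muF Fm t)%N.
Proof.
move=> t_le; have [G [GF freeG cardG]] := exists_free_subset t_le.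
rewrite -{1}cardG; apply: leq_bigmax_cond.
rewrite GF freeG; apply/forall_inP => v vG.
by rewrite -cardG wtF_le_card.
Qed.

End Weights.
End ProjectiveMetricBound.

Theorem theorem7p1 (F : finFieldType) (N : nat) (Fm C : {set 'rV[F]_N}) :
  spanning_family Fm -> (1 < #|C|)%N ->
  let d := min_distF Fm C in
  (#|C| <= #|F| ^ (N - muF Fm (d - 1)))%N /\
  (#|F| ^ (N - muF Fm (d - 1)) <= #|F| ^ (N - d + 1))%N.
Proof.
move=> [_ _ spanF] _ d.
have [G /and3P[_ freeG /forall_inP wtG] cardG] := muF_attained Fm (d - 1).
split.
  rewrite -cardG -(dim_spanS_free freeG).
  apply: card_le_codim => x y xC yC /wtG; apply: contraTeq => xy.
  have d_le : (d <= wtF Fm (y - x))%N := min_distF_le Fm xC yC xy.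
  have w_gt0 : (0 < wtF Fm (y - x))%N.
    by apply: wtF_gt0; rewrite ?spanF ?memvf // subr_eq0 eq_sym.
  (* [set] merges two elaborations of [y - x] into a single atom for [lia]. *)
  move: d_le w_gt0; set w := wtF Fm (y - x); lia.
have d_le_N : (d - 1 <= \dim (spanS Fm))%N.
  by rewrite spanF dim_rowf leq_subLR (leq_trans (min_distF_leN Fm C)).
apply: leq_pexp2l; first by apply/card_gt0P; exists 0.
by have := leq_muF d_le_N; lia.
Qed.
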